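(* Let $(\Gamma_n)$ be a sequence of invertible $n\times n$ correlation matrices satisfying the Correlation Condition with bounding function $g$, and let $S=\sup_n\|\Gamma_n^{-1}\|_{\max}$. Fix $\alpha\ge1$. Then there is $n_0$ such that for all $n\ge n_0$ and every positive integer $q$, $$\sum_{y\in\mathcal{M}_{n,q}}\exp\big(-\log(\alpha n)\,y^T\Gamma_n y\big)\ \le\ \exp\big((2+S)\,g(\alpha)\big),$$ where $\mathcal{M}_{n,q}=\{y\in(\mathbb{Z}\cap[-q/2,q/2))^n:\ \|2\pi y/q\|_\infty\le 1/\sqrt q\}$.
   Context: $\|M\|_{\max}=\max_{a,b}|M_{ab}|$. Correlation Condition for a sequence $(\Gamma_n)$ of invertible $n\times n$ correlation matrices, with $\Psi_n=\Gamma_n^{-1}$: (i) $\sup_n\|\Psi_n\|_{\max}<\infty$; (ii) letting $\Psi_{n,k}$ be the principal submatrix of the first $k$ rows and columns of $\Psi_n$, partitioned as $\begin{bmatrix}\Psi^{(11)}_{n,k}&\Psi^{(12)}_{n,k}\\\Psi^{(21)}_{n,k}&\Psi^{(22)}_{n,k}\end{bmatrix}$ with $\Psi^{(11)}_{n,k}$ the leading $(k-1)\times(k-1)$ block and $\Psi^{(22)}_{n,k}$ the $(k,k)$ entry, define $a^{(n)}_1=(\Psi_n)_{11}^{-1}$ and $a^{(n)}_k=\big(\Psi^{(22)}_{n,k}-\Psi^{(21)}_{n,k}(\Psi^{(11)}_{n,k})^{-1}\Psi^{(12)}_{n,k}\big)^{-1}$ for $k\ge2$; then there is a monotone decreasing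 $g:[1,\infty)\to[0,\infty)$ independent of $n$ with $g(\alpha)\to0$ as $\alpha\to\infty$ and $\sup_n\sum_{k=1}^n(\alpha n)^{-a_k^{(n)}}\le g(\alpha)$ for all $\alpha\ge1$. *)

From HB Require Import structures.
From mathcomp Require Import all_boot all_order all_algebra.
From mathcomp Require Import all_classical all_reals all_analysis.
Set Implicit Arguments. Unset Strict Implicit. Unset Printing Implicit Defensive.
Import Order.TTheory GRing.Theory Num.Theory.
Import numFieldNormedType.Exports.
Local Open Scope classical_set_scope.
Local Open Scope ring_scope.

Definition maxnorm (R : realType) m n (M : 'M[R]_(m, n)) : R :=
  \big[Num.max/0]_(a < m) \big[Num.max/0]_(b < n) `|M a b|.

Definition supnorm (R : realType) n (v : 'I_n -> R) : R :=
  \big[Num.max/0]_(i < n) `|v i|.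

Definition correlation_matrix (R : realType) n (G : 'M[R]_n) : Prop :=
  G^T = G /\ (forall i, G i i = 1) /\
  (forall x : 'cV[R]_n, 0 <= (x^T *m G *m x) 0 0).

(* a_{k+1}^{(n)} for the 0-based index k : 'I_n.  Psi_{n,k+1} has leading
   block Psi11 (size k), column Psi12, row Psi21, corner Psi22 = Psi k k.
   For k = 0 the blocks are empty and this is (Psi 0 0)^-1. *)
Definition schur_a (R : realType) n (Psi : 'M[R]_n) (k : 'I_n) : R :=
  let w : 'I_k -> 'I_n := widen_ord (ltnW (ltn_ord k)) in
  let P11 : 'M[R]_k := \matrix_(i, j) Psi (w i) (w j) in
  let P12 : 'M[R]_(k, 1) := \matrix_(i, j) Psi (w i) k in
  let P21 : 'M[R]_(1, k) := \matrix_(i, j) Psi k (w j) in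
  (Psi k k - (P21 *m invmx P11 *m P12) 0 0)^-1.

Definition CorrelationCondition (R : realType) (Gamma : forall n, 'M[R]_n)
    (g : R -> R) : Prop :=
  (exists B : R, forall n, maxnorm (invmx (Gamma n)) <= B) /\
  (forall a b : R, 1 <= a -> a <= b -> g b <= g a) /\
  (forall a : R, 1 <= a -> 0 <= g a) /\
  (g x @[x --> +oo] --> (0 : R)) /\
  (forall (n : nat) (alpha : R), 1 <= alpha ->
     \sum_(k < n) (alpha * n%:R) `^ (- schur_a (invmx (Gamma n)) k) <= g alpha).

Definition supInvMax (R : realType) (Gamma : forall n, 'M[R]_n) : R :=
  sup [set x : R | exists n, x = maxnorm (invmx (Gamma n))].

(* Enumeration of candidate integers: j : 'I_(2q+1) |-> j - q, covering [-q, q]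
   which contains Z \cap [-q/2, q/2). *)
Definition toZ (q : nat) (j : 'I_(2 * q).+1) : int := (j : nat)%:Z - q%:Z.

Definition inM (R : realType) (n q : nat) (y : 'I_n -> int) : bool :=
  [forall i, (- (q%:R / 2) <= (y i)%:~R :> R) && ((y i)%:~R < q%:R / 2 :> R)] &&
  (supnorm (fun i => 2 * pi * (y i)%:~R / q%:R : R) <= 1 / Num.sqrt (q%:R : R)).

Definition quadform (R : realType) n (G : 'M[R]_n) (y : 'I_n -> int) : R :=
  let yR : 'cV[R]_n := \col_i (y i)%:~R in (yR^T *m G *m yR) 0 0.

Definition Msum (R : realType) n (G : 'M[R]_n) (q : nat) (alpha : R) : R :=
  \sum_(y : {ffun 'I_n -> 'I_(2 * q).+1} | inM R q (fun i => toZ (y i)))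
     expR (- ln (alpha * n%:R) * quadform G (fun i => toZ (y i))).

From HB Require Import structures.
From mathcomp Require Import all_boot all_order all_algebra.
From mathcomp Require Import all_classical all_reals all_analysis.
From mathcomp Require Import ring lra.
Import Order.TTheory GRing.Theory Num.Theory.
Import numFieldNormedType.Exports.
Local Open Scope classical_set_scope.
Local Open Scope ring_scope.
Set Implicit Arguments. Unset Strict Implicit. Unset Printing Implicit Defensive.

(* Write [Psi = Gamma_n^-1], [P_k] for its leading k x k block and [L = log (alpha n)].
   Dropping the constraint [y \in M_(n,q)] (all terms are positive), bound the sum over
   the whole box.  Completing the square in the last coordinate, [qf (P_(k+1))^-1 y] is
   [a_k (y_k + t)^2 + qf (P_k)^-1 (y_0, ..., y_(k-1))], where [a_k = (P_(k+1))^-1_kk] is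
   the Schur-complement quantity of the Correlation Condition.  Summing over [y_k] first
   thus bounds the box sum by a product of one-dimensional Gaussian sums
   [sum_j exp (- L a_k (t + j)^2) <= 1 + 3 exp (- L a_k)], valid once [L a_k >= 4096];
   this threshold holds for large n since [(alpha' n)^(-a_k) <= g alpha'] is tiny for a
   large fixed [alpha'].  Finally [prod (1 + 3 x_k) <= exp (3 sum x_k) <= exp (3 g alpha)],
   and [3 <= 2 + S] because [Gamma_1^-1 = 1]. *)

Section GaussianSums.
Variable R : realType.
Implicit Types s c d x y : R.

Definition gauss s x := expR (- (s * x ^+ 2)).

Lemma gauss_ge0 s x : 0 <= gauss s x.
Proof. exact: expR_ge0. Qed.

Lemma gauss_le1 s x : 0 <= s -> gauss s x <= 1.
Proof. by move=> s0; rewrite /gauss -expR0 ler_expR oppr_le0 mulr_ge0 ?sqr_ge0. Qed.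

Lemma gaussN s x : gauss s (- x) = gauss s x.
Proof. by rewrite /gauss sqrrN. Qed.

Lemma gauss1 s : gauss s 1 = expR (- s).
Proof. by rewrite /gauss expr1n mulr1. Qed.

Lemma le_gauss s x y : 0 <= s -> 0 <= y -> y <= x -> gauss s x <= gauss s y.
Proof. by move=> s0 y0 yx; rewrite ler_expR lerN2 ler_wpM2l // ler_sqr ?nnegrE ?(le_trans y0). Qed.

Lemma expRN_mul_le1 x : expR (- x) * (1 + x) <= 1.
Proof.
have : expR (- x) * expR x = 1 by rewrite -expRD addNr expR0.
have := expR_ge1Dx x; have := expR_gt0 (- x); nra.
Qed.

Lemma expRN_le_fifth s : 4 <= s -> expR (- s) <= 1/5.
Proof. by move=> s4; have := expRN_mul_le1 s; have := expR_gt0 (- s); nra. Qed.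

Lemma gauss_geometric_sum s c N : 0 <= s -> expR (- s) <= 1/5 -> 0 <= c ->
  \sum_(0 <= i < N) gauss s (c + i%:R) <= 5/4 * gauss s c.
Proof.
move=> s0 u5; elim: N c => [|N IH] c c0; first by rewrite big_geq // mulr_ge0 ?gauss_ge0.
rewrite big_nat_recl // addr0.
under eq_bigr => i _ do rewrite -natr1 addrA (addrAC c).
have ratio : gauss s (c + 1) <= gauss s c * (1/5).
  apply: le_trans (_ : gauss s c * expR (- s) <= _); last by rewrite ler_wpM2l ?gauss_ge0.
  rewrite /gauss -expRD ler_expR.
  have := sqr_ge0 c; nra.
have := IH (c + 1) ltac:(lra); have := gauss_ge0 s c; lra.
Qed.

Lemma gauss_tail s c N : 0 <= s -> expR (- s) <= 1/5 -> 0 <= c ->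
  \sum_(0 <= i < N) gauss s (c + i%:R) <= gauss s c + 5/4 * gauss s (c + 1).
Proof.
move=> s0 u5 c0; case: N => [|N].
  by rewrite big_geq // addr_ge0 ?mulr_ge0 ?gauss_ge0.
rewrite big_nat_recl // addr0 lerD2l.
under eq_bigr => i _ do rewrite -natr1 addrA (addrAC c).
by apply: gauss_geometric_sum => //; lra.
Qed.

Lemma gauss_pair_le s c : 4096 <= s -> 0 <= c -> c <= 1/2 ->
  gauss s c + gauss s (1 - c) <= 1 + 4/3 * expR (- s).
Proof.
move=> s4096 c0 c_half; have s0 : 0 < s by lra.
have [c_small|c_big] := lerP c (1/(8*s)).
- have e14 : expR (1/4 : R) <= 4/3.
    have : expR (- (1/4)) * expR (1/4) = 1 :> R by rewrite -expRD addNr expR0.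
    by have := expR_ge1Dx (- (1/4) : R); have := expR_gt0 (1/4 : R); nra.
  have : gauss s (1 - c) <= expR (- s) * (4/3).
    apply: le_trans (_ : expR (- s) * expR (1/4) <= _); last by rewrite ler_wpM2l ?expR_ge0.
    rewrite /gauss -expRD ler_expR.
    move: c_small; rewrite ler_pdivlMr ?mulr_gt0 // => c_small.
    have : 0 <= s * (c * c) by apply: mulr_ge0; nra.
    rewrite expr2; nra.
  have := gauss_le1 c (ltW s0); lra.
- (* Now [exp (- 1/(64 s)) + exp (- s/4) <= 1], because [exp (s/4) >= 64 s + 1]. *)
  have hc : gauss s c <= expR (- (1/(64*s))).
    rewrite ler_expR lerN2.
    have -> : 1/(64 * s) = s * (1/(8*s))^+2 by field; lra.
    by rewrite ler_wpM2l ?(ltW s0) // ler_sqr ?nnegrE ?(ltW c_big) // divr_ge0 //; lra.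
  have h1c : gauss s (1 - c) <= expR (- (s/4)).
    rewrite ler_expR lerN2 -[s / 4]mulr1 -mulrA ler_wpM2l; nra.
  have big : 64 * s + 1 <= expR (s/4).
    have -> : s / 4 = s / 8 + s / 8 by field.
    rewrite expRD; have := expR_ge1Dx (s/8); nra.
  have F1 : expR (- (s/4)) * (64 * s + 1) <= 1.
    by rewrite -[leRHS](expR0) -(addNr (s/4)) expRD ler_wpM2l ?expR_ge0.
  have E1 : expR (- (1/(64*s))) * (64 * s + 1) <= 64 * s.
    have -> : 64 * s + 1 = 64 * s * (1 + 1/(64*s)) by field; lra.
    rewrite mulrCA -[X in _ <= X]mulr1 ler_wpM2l //; [lra | exact: expRN_mul_le1].
  have : expR (- (1/(64*s))) + expR (- (s/4)) <= 1.
    have p : 0 < 64 * s + 1 by lra.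
    by rewrite -(ler_pM2r p) mulrDl; lra.
  have := expR_ge0 (- s); lra.
Qed.

Lemma gauss_tails_le s c : 4096 <= s -> 0 <= c -> c <= 1 ->
  gauss s c + gauss s (1 - c) + 5/4 * (gauss s (c + 1) + gauss s (2 - c)) <= 1 + 3 * expR (- s).
Proof.
move=> s4096; wlog c_half : c / c <= 1/2 => [hwlog c0 c1|c0 _].
  have [c_half|c_big] := lerP c (1/2); first exact: hwlog.
  have := hwlog (1 - c) ltac:(lra) ltac:(lra) ltac:(lra).
  have -> : 1 - (1 - c) = c by ring.
  have -> : 1 - c + 1 = 2 - c by ring.
  have -> : 2 - (1 - c) = c + 1 by ring.
  lra.
have s0 : 0 <= s by lra.
have h1 : gauss s (c + 1) <= expR (- s) by rewrite -gauss1 le_gauss //; lra.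
have h2 : gauss s (2 - c) <= expR (- s) * expR (- s).
  apply: le_trans (_ : gauss s (3/2) <= _); first by apply: le_gauss; lra.
  by rewrite /gauss -expRD ler_expR; lra.
have u5 : expR (- s) <= 1/5 by apply: expRN_le_fifth; lra.
have := gauss_pair_le s4096 c0 c_half; have := expR_ge0 (- s); nra.
Qed.

Lemma gauss_two_tails_le s c d M K : 4096 <= s -> 0 <= c -> 0 <= d -> 1 <= c + d ->
  \sum_(0 <= i < M) gauss s (c + i%:R) + \sum_(0 <= i < K) gauss s (d + i%:R)
    <= 1 + 3 * expR (- s).
Proof.
move=> s4096 c0 d0 cd; have s0 : 0 <= s by lra.
have u5 : expR (- s) <= 1/5 by apply: expRN_le_fifth; lra.
apply: le_trans (lerD (gauss_tail M s0 u5 c0) (gauss_tail K s0 u5 d0)) _.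
set c' := Num.min c 1.
have c'_le : c' <= c by rewrite ge_min lexx.
have c'01 : 0 <= c' <= 1 by rewrite le_min c0 ler01 ge_min lexx orbT.
have d'_le : 1 - c' <= d.
  by rewrite /c'; case: (leP c 1) => _; lra.
have := gauss_tails_le s4096 (andP c'01).1 (andP c'01).2.
have := le_gauss s0 _ c'_le; have := le_gauss s0 _ d'_le.
have := @le_gauss s (c + 1) (c' + 1) s0; have := @le_gauss s (d + 1) (2 - c') s0.
move: c'01 => /andP[? ?]; lra.
Qed.

Lemma exists_sign_change c0 N : exists2 k, (k <= N)%N &
  ((k < N)%N -> 0 <= c0 + k%:R) /\ ((0 < k)%N -> c0 + k%:R < 1).
Proof.
elim: N => [|N [k kN [k_nonneg k_lt1]]]; first by exists 0%N.
have [kN'|Nk] := ltnP k N; first by exists k => //; [exact: ltnW | split=> // _; exact: k_nonneg].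
have kE : k = N by apply/eqP; rewrite eqn_leq kN Nk.
subst k.
have [N_nonneg|N_neg] := lerP 0 (c0 + N%:R); first by exists N.
by exists N.+1 => //; split=> [|_]; [rewrite ltnn | rewrite -natr1; lra].
Qed.

Lemma gauss_window_le s c0 N : 4096 <= s ->
  \sum_(0 <= j < N) gauss s (c0 + j%:R) <= 1 + 3 * expR (- s).
Proof.
move=> s4096; have [k kN [k_nonneg k_lt1]] := exists_sign_change c0 N.
set c := Num.max 0 (c0 + k%:R); set d := Num.max 0 (1 - (c0 + k%:R)).
rewrite (big_cat_nat (leq0n k) kN) /= addrC.
have -> : \sum_(k <= j < N) gauss s (c0 + j%:R) = \sum_(0 <= i < N - k) gauss s (c + i%:R).
  have [/k_nonneg c_ge0|Nk] := ltnP k N; last first.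
    have -> : (N - k = 0)%N by apply/eqP; rewrite subn_eq0.
    by rewrite !big_geq.
  rewrite /c max_r // -{1}(add0n k) big_addn.
  by apply: eq_bigr => i _; rewrite natrD addrA (addrAC c0).
have -> : \sum_(0 <= j < k) gauss s (c0 + j%:R) = \sum_(0 <= i < k) gauss s (d + i%:R).
  case: (posnP k) => [-> | /k_lt1 c_lt1]; first by rewrite !big_geq.
  rewrite /d max_r; last lra.
  rewrite big_nat_rev add0n; apply: eq_big_nat => i /andP [_ ik].
  by rewrite -gaussN natrB // -natr1; congr gauss; ring.
apply: gauss_two_tails_le; rewrite ?le_max ?lexx //.
have : c0 + k%:R <= c by rewrite le_max lexx orbT.
have : 1 - (c0 + k%:R) <= d by rewrite le_max lexx orbT.
lra.
Qed.
End GaussianSums.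

Definition qf (R : ringType) k (A : 'M[R]_k) (z : 'I_k -> R) :=
  \sum_i \sum_j z i * A i j * z j.

Section SchurComplement.
Variables (R : fieldType) (k : nat) (P : 'M[R]_k.+1) (P' : 'M[R]_k).
Hypotheses (P_unit : P \in unitmx) (P'_unit : P' \in unitmx) (P_sym : P^T = P).
Hypothesis P_lead : forall i j, P (widen_ord (leqnSn k) i) (widen_ord (leqnSn k) j) = P' i j.

Local Notation W := (widen_ord (leqnSn k)).
Local Notation m := (@ord_max k).
Local Notation M := (invmx P).

Local Notation p12 := (\col_i P (W i) m : 'cV[R]_k).
Local Notation p21 := (\row_j P m (W j) : 'rV[R]_k).
Local Notation u := (\col_i M (W i) m : 'cV[R]_k).
Local Notation v := (\row_j M m (W j) : 'rV[R]_k).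

Lemma mulmx_recr (A B : 'M[R]_k.+1) a b :
  (A *m B) a b = \sum_(j < k) A a (W j) * B (W j) b + A a m * B m b.
Proof. by rewrite mxE big_ord_recr. Qed.

Lemma widen_neq_max i : (W i == m) = false.
Proof. by apply/negbTE; rewrite neq_ltn /= ltn_ord. Qed.

Lemma widen_eq i j : (W i == W j) = (i == j).
Proof. by rewrite -val_eqE. Qed.

Lemma invmx_sym : M^T = M.
Proof. by rewrite trmx_inv P_sym. Qed.

Lemma lead_mul_last_col : P' *m u = - M m m *: p12.
Proof.
apply/matrixP => i l; rewrite (ord1 l) !mxE.
have := mulmx_recr P M (W i) m; rewrite mulmxV // mxE widen_neq_max.
under eq_bigr do rewrite P_lead.
move/eqP; rewrite eq_sym addr_eq0 => /eqP h; rewrite mulNr mulrC -h.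
by apply: eq_bigr => j _; rewrite mxE.
Qed.

Lemma last_row_mul_lead : v *m P' = - M m m *: p21.
Proof.
apply/matrixP => l j; rewrite (ord1 l) !mxE.
have := mulmx_recr M P m (W j); rewrite mulVmx // mxE eq_sym widen_neq_max.
under eq_bigr do rewrite P_lead.
move/eqP; rewrite eq_sym addr_eq0 => /eqP h; rewrite mulNr -h.
by apply: eq_bigr => i _; rewrite mxE.
Qed.

Lemma schur_mul_invmx_corner : (P m m - (p21 *m invmx P' *m p12) 0 0) * M m m = 1.
Proof.
have u_eq : u = - M m m *: (invmx P' *m p12).
  by rewrite scalemxAr -lead_mul_last_col mulmxA mulVmx ?mul1mx.
have := mulmx_recr P M m m; rewrite mulmxV // mxE eqxx mulr1n => ->.
rewrite mulrBl addrC; congr (_ + _).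
have -> : \sum_(j < k) P m (W j) * M (W j) m = (p21 *m u) 0 0.
  by rewrite mxE; apply: eq_bigr => j _; rewrite !mxE.
by rewrite u_eq -scalemxAr mulmxA [in RHS]mxE mulNr mulrC.
Qed.

Lemma invmx_corner : M m m = (P m m - (p21 *m invmx P' *m p12) 0 0)^-1.
Proof. exact/esym/mulr1_eq/schur_mul_invmx_corner. Qed.

Lemma invmx_corner_neq0 : M m m != 0.
Proof.
by apply/eqP => M0; move: schur_mul_invmx_corner; rewrite M0 mulr0 => /eqP; rewrite eq_sym oner_eq0.
Qed.

Lemma invmx_lead :
  invmx P' = \matrix_(i, j) (M (W i) (W j) - M (W i) m * M m (W j) / M m m).
Proof.
set K := \matrix_(i, j) _.
suff KP : K *m P' = 1%:M by rewrite -[K]mulmx1 -(mulmxV P'_unit) mulmxA KP mul1mx.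
apply/matrixP => i l; have := mulmx_recr M P (W i) (W l).
rewrite mulVmx // !mxE widen_eq => ->.
under eq_bigr do rewrite !mxE mulrBl.
under [in RHS]eq_bigr do rewrite P_lead.
rewrite sumrB; congr (_ + _).
have vP : \sum_j M m (W j) * P' j l = - M m m * P m (W l).
  have := congr1 (fun A : 'rV_k => A 0 l) last_row_mul_lead; rewrite !mxE => <-.
  by apply: eq_bigr => j _; rewrite mxE.
rewrite (eq_bigr (fun j => M (W i) m / M m m * (M m (W j) * P' j l))); last first.
  by move=> j _; ring.
by rewrite -mulr_sumr vP; field; exact: invmx_corner_neq0.
Qed.

Lemma qf_invmx_recr (z : 'I_k.+1 -> R) :
  let c := \sum_i M m (W i) * z (W i) in
  qf M z = M m m * (z m + c / M m m) ^+ 2 + qf (invmx P') (fun i => z (W i)).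
Proof.
move=> c; set Q := \sum_i \sum_j z (W i) * M (W i) (W j) * z (W j).
have M_sym a b : M a b = M b a by rewrite -[in LHS]invmx_sym mxE.
have col_c : \sum_i z (W i) * M (W i) m = c.
  by apply: eq_bigr => i _; rewrite M_sym mulrC.
have qfM : qf M z = Q + 2 * z m * c + M m m * z m ^+ 2.
  rewrite /qf big_ord_recr /=; under eq_bigr do rewrite big_ord_recr /=.
  rewrite big_split /= big_ord_recr /= -mulr_suml col_c.
  have -> : \sum_j z m * M m (W j) * z (W j) = z m * c.
    by rewrite mulr_sumr; apply: eq_bigr => j _; rewrite mulrA.
  rewrite -/Q; ring.
have qfN : qf (invmx P') (fun i => z (W i)) = Q - c * c / M m m.
  rewrite /qf invmx_lead.
  under eq_bigr do under eq_bigr do rewrite mxE mulrBr mulrBl.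
  under eq_bigr do rewrite sumrB.
  rewrite sumrB; congr (_ - _).
  rewrite -mulrA -{1}col_c mulr_suml; apply: eq_bigr => i _.
  by rewrite /c mulr_suml mulr_sumr; apply: eq_bigr => j _; ring.
by rewrite qfM qfN; field; exact: invmx_corner_neq0.
Qed.
End SchurComplement.

Section FfunSplit.
Variables (R : nmodType) (k : nat) (T : finType).

Definition ffun_rcons (f : {ffun 'I_k -> T}) (x : T) : {ffun 'I_k.+1 -> T} :=
  [ffun i => if unlift ord_max i is Some j then f j else x].

Lemma widen_ord_lift (j : 'I_k) : widen_ord (leqnSn k) j = lift ord_max j.
Proof. by apply/val_inj; rewrite /= /bump leqNgt ltn_ord. Qed.

Lemma ffun_rcons_max f x : ffun_rcons f x ord_max = x.
Proof. by rewrite ffunE unlift_none. Qed.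

Lemma ffun_rcons_widen f x j : ffun_rcons f x (widen_ord (leqnSn k) j) = f j.
Proof. by rewrite widen_ord_lift ffunE liftK. Qed.

Lemma sum_ffun_recr (F : {ffun 'I_k.+1 -> T} -> R) :
  \sum_f F f = \sum_(f : {ffun 'I_k -> T}) \sum_(x : T) F (ffun_rcons f x).
Proof.
rewrite pair_bigA /= (reindex (fun p : {ffun 'I_k -> T} * T => ffun_rcons p.1 p.2)) //.
apply: onW_bij; exists (fun f : {ffun 'I_k.+1 -> T} => ([ffun j => f (lift ord_max j)], f ord_max)).
  move=> [f x] /=; congr (_, _); last exact: ffun_rcons_max.
  by apply/ffunP => j; rewrite ffunE -widen_ord_lift ffun_rcons_widen.
move=> f; apply/ffunP => i; rewrite ffunE.
by case: unliftP => [j ->|->] //; rewrite ffunE.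
Qed.
End FfunSplit.

Definition box_sum (R : realType) (q : nat) (L : R) k (A : 'M[R]_k) :=
  \sum_(f : {ffun 'I_k -> 'I_(2 * q).+1}) expR (- L * qf A (fun i => (toZ (f i))%:~R)).

Lemma box_sum_recr (R : realType) k (P : 'M[R]_k.+1) (P' : 'M[R]_k) q L :
  P \in unitmx -> P' \in unitmx -> P^T = P ->
  (forall i j, P (widen_ord (leqnSn k) i) (widen_ord (leqnSn k) j) = P' i j) ->
  4096 <= L * invmx P ord_max ord_max ->
  box_sum q L (invmx P)
    <= (1 + 3 * expR (- (L * invmx P ord_max ord_max))) * box_sum q L (invmx P').
Proof.
move=> P_unit P'_unit P_sym P_lead s4096.
set s := L * invmx P ord_max ord_max.
rewrite /box_sum sum_ffun_recr mulr_sumr; apply: ler_sum => f _.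
set c := \sum_i invmx P ord_max (widen_ord (leqnSn k) i) * (toZ (f i))%:~R.
have split_x x : expR (- L * qf (invmx P) (fun i => (toZ (ffun_rcons f x i))%:~R))
    = expR (- L * qf (invmx P') (fun i => (toZ (f i))%:~R))
      * gauss s ((toZ x)%:~R + c / invmx P ord_max ord_max).
  rewrite (qf_invmx_recr P_unit P'_unit P_sym P_lead) ffun_rcons_max.
  under eq_bigr do rewrite ffun_rcons_widen.
  under [X in qf _ X]funext do rewrite ffun_rcons_widen.
  by rewrite /gauss -expRD /s -/c; congr expR; ring.
under eq_bigr do rewrite split_x.
rewrite -mulr_sumr mulrC ler_wpM2r ?expR_ge0 //.
rewrite (eq_bigr (fun j : 'I__ => gauss s ((c / invmx P ord_max ord_max - q%:R) + j%:R))).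
  by rewrite -(big_mkord xpredT (fun j => gauss s (_ + j%:R))) gauss_window_le.
by move=> j _; rewrite /toZ intrB; congr gauss; rewrite -!pmulrn; ring.
Qed.

Lemma qf_mx (R : ringType) k (A : 'M[R]_k) (x : 'cV_k) :
  (x^T *m A *m x) 0 0 = qf A (fun i => x i 0).
Proof.
rewrite mxE /qf; under eq_bigr do rewrite mxE mulr_suml.
rewrite exchange_big /=; apply: eq_bigr => i _; apply: eq_bigr => j _.
by rewrite !mxE.
Qed.

Section PositiveSemidefinite.
Variables (R : realFieldType) (k : nat) (A : 'M[R]_k).
Hypotheses (A_sym : A^T = A) (A_psd : forall z, 0 <= qf A z).

Definition bilin (x y : 'I_k -> R) := \sum_i \sum_j x i * A i j * y j.

Lemma qf_addZ x y t :
  qf A (fun i => x i + t * y i) = qf A x + t * (bilin x y + bilin y x) + t ^+ 2 * qf A y.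
Proof.
rewrite /qf /bilin mulrDr !mulr_sumr -!big_split /=; apply: eq_bigr => i _.
rewrite !mulr_sumr -!big_split /=; apply: eq_bigr => j _; ring.
Qed.

Lemma bilinC x y : bilin x y = bilin y x.
Proof.
rewrite /bilin exchange_big /=; apply: eq_bigr => i _; apply: eq_bigr => j _.
by rewrite -[in RHS]A_sym mxE; ring.
Qed.

(* Minimising [t |-> qf A (z + t y)] forces the polar form to vanish on an isotropic [z]. *)
Lemma psd_bilin_eq0 z : qf A z = 0 -> forall y, bilin y z = 0.
Proof.
move=> qz y; set b := bilin y z; set d := qf A y; have d0 : 0 <= d := A_psd y.
have := A_psd (fun i => z i + (- b / (d + 1)) * y i).
rewrite qf_addZ qz (bilinC z) -/b -/d.
have -> : 0 + - b / (d + 1) * (b + b) + (- b / (d + 1)) ^+ 2 * d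
    = - (b ^+ 2 * (d + 2)) / (d + 1) ^+ 2 by field; lra.
have d1_pos : 0 < (d + 1) ^+ 2 by rewrite exprn_gt0 //; lra.
rewrite pmulr_lge0 ?invr_gt0 //.
rewrite oppr_ge0 => hb; apply/eqP; rewrite -sqrf_eq0 eq_le sqr_ge0 andbT.
by rewrite -(pmulr_lle0 _ (_ : 0 < d + 2)) //; lra.
Qed.

Lemma psd_unit_qf_eq0 : A \in unitmx -> forall z, qf A z = 0 -> forall i, z i = 0.
Proof.
move=> A_unit z qz.
have Az : A *m (\col_i z i) = 0.
  apply/matrixP => i j; rewrite !mxE (ord1 j) -[RHS](psd_bilin_eq0 qz (fun l => (l == i)%:R)).
  rewrite /bilin [in RHS](bigD1 i) //= [X in _ = _ + X]big1 => [|l li]; last first.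
    by apply: big1 => m _; rewrite (negbTE li) !mul0r.
  by rewrite addr0; apply: eq_bigr => m _; rewrite eqxx mul1r mxE.
have : (\col_i z i : 'cV_k) = 0.
  by rewrite -[\col_i z i]mul1mx -(mulVmx A_unit) -mulmxA Az mulmx0.
by move=> /matrixP z0 i; have := z0 i 0; rewrite !mxE.
Qed.

Lemma psd_unit_invmx_qf_eq0 :
  A \in unitmx -> forall z, qf (invmx A) z = 0 -> forall i, z i = 0.
Proof.
move=> A_unit z qz; set zc : 'cV_k := \col_i z i.
have zcE : (fun i => zc i 0) = z by apply: funext => i; rewrite mxE.
have Ainv_sym : (invmx A)^T = invmx A by rewrite trmx_inv A_sym.
have w0 := psd_unit_qf_eq0 A_unit (z := fun i => (invmx A *m zc) i 0).
have zc0 : zc = 0.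
  rewrite -[zc]mul1mx -(mulmxV A_unit) -mulmxA; apply/matrixP => i j.
  rewrite (ord1 j) !mxE big1 // => l _; rewrite w0 ?mulr0 // -qf_mx trmx_mul Ainv_sym.
  by rewrite mulmxA -(mulmxA _ _ A) mulVmx // mulmx1 qf_mx zcE.
by move=> i; rewrite -zcE zc0 mxE.
Qed.
End PositiveSemidefinite.

Lemma unitmx_of_ker (R : fieldType) k (A : 'M[R]_k) :
  (forall u : 'rV_k, u *m A = 0 -> u = 0) -> A \in unitmx.
Proof.
move=> ker0; rewrite -row_free_unit -kermx_eq0; apply/eqP/row_matrixP => i.
by rewrite row0; apply: ker0; rewrite -row_mul mulmx_ker row0.
Qed.

Section LeadingBlocks.
Variables (R : realType) (n : nat) (Psi : 'M[R]_n.+1).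
Hypothesis Psi_sym : Psi^T = Psi.
Hypothesis Psi_definite : forall z, qf Psi z = 0 -> forall i, z i = 0.

Definition lead_mx k : 'M[R]_k := \matrix_(i, j) Psi (inord i) (inord j).

Lemma lead_mx_sym k : (lead_mx k)^T = lead_mx k.
Proof. by apply/matrixP => i j; rewrite !mxE -[in LHS]Psi_sym mxE. Qed.

Lemma lead_mx_full : lead_mx n.+1 = Psi.
Proof. by apply/matrixP => i j; rewrite !mxE !inord_val. Qed.

Lemma lead_mx_widen k i j :
  lead_mx k.+1 (widen_ord (leqnSn k) i) (widen_ord (leqnSn k) j) = lead_mx k i j.
Proof. by rewrite !mxE. Qed.

Lemma lead_mx_unit k : (k <= n.+1)%N -> lead_mx k \in unitmx.
Proof.
move=> kn; apply: unitmx_of_ker => u uP0.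
have inordK' (i : 'I_k) : inord i = widen_ord kn i :> 'I_n.+1.
  by apply/val_inj; rewrite /= inordK // (leq_trans (ltn_ord i)).
pose z (i : 'I_n.+1) := if insub (i : nat) is Some j then u 0 j else 0.
have z_widen (i : 'I_k) : z (widen_ord kn i) = u 0 i.
  by rewrite /z -[nat_of_ord (widen_ord kn i)]/(nat_of_ord i) valK.
have z_out (i : 'I_n.+1) : ~~ (i < k)%N -> z i = 0 by move=> ik; rewrite /z insubN.
have qz : qf Psi z = qf (lead_mx k) (u 0).
  rewrite /qf (bigID (fun i : 'I_n.+1 => (i < k)%N)) /= [X in _ + X]big1 => [|i ik]; last first.
    by apply: big1 => j _; rewrite (z_out i ik) !mul0r.
  rewrite addr0 (big_ord_narrow kn); apply: eq_bigr => i _.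
  rewrite (bigID (fun j : 'I_n.+1 => (j < k)%N)) /= [X in _ + X]big1 => [|j jk]; last first.
    by rewrite (z_out j jk) mulr0.
  rewrite addr0 (big_ord_narrow kn); apply: eq_bigr => j _.
  by rewrite !z_widen mxE !inordK'.
have : qf (lead_mx k) (u 0) = 0.
  rewrite /qf exchange_big /=; apply: big1 => j _; rewrite -mulr_suml.
  by have := congr1 (fun A : 'rV_k => A 0 j) uP0; rewrite !mxE => ->; rewrite mul0r.
rewrite -qz => /Psi_definite z0; apply/rowP => j; rewrite mxE -z_widen; exact: z0.
Qed.

Lemma schur_a_lead (k : 'I_n.+1) :
  schur_a Psi k = invmx (lead_mx k.+1) ord_max ord_max.
Proof.
have w_inord (i : 'I_k) : inord i = widen_ord (ltnW (ltn_ord k)) i :> 'I_n.+1.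
  by apply/val_inj; rewrite /= inordK // (leq_trans (ltn_ord i)) // ltnW.
rewrite (invmx_corner (lead_mx_unit (ltn_ord k)) (lead_mx_unit (ltnW (ltn_ord k)))
  (@lead_mx_widen k)) /schur_a.
have -> : (\matrix_(i, j) Psi (widen_ord (ltnW (ltn_ord k)) i) (widen_ord (ltnW (ltn_ord k)) j))
    = lead_mx k by apply/matrixP => i j; rewrite !mxE !w_inord.
have ord_max_k : inord (@ord_max k) = k :> 'I_n.+1 by rewrite inord_val.
have rowE : \row_j lead_mx k.+1 ord_max (widen_ord (leqnSn k) j)
    = \row_j Psi k (widen_ord (ltnW (ltn_ord k)) j) :> 'rV_k.
  by apply/rowP => j; rewrite !mxE ord_max_k w_inord.
have colE : \col_i lead_mx k.+1 (widen_ord (leqnSn k) i) ord_max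
    = \col_i Psi (widen_ord (ltnW (ltn_ord k)) i) k :> 'cV_k.
  by apply/colP => i; rewrite !mxE ord_max_k w_inord.
by rewrite rowE colE [lead_mx k.+1 ord_max ord_max]mxE ord_max_k.
Qed.

Lemma box_sum_lead_le q L k : (forall i : 'I_n.+1, 4096 <= L * schur_a Psi i) ->
  (k <= n.+1)%N ->
  box_sum q L (invmx (lead_mx k)) <= \prod_(i < k) (1 + 3 * expR (- (L * schur_a Psi (inord i)))).
Proof.
move=> schur_large; elim: k => [|k IH] kn.
  rewrite big_ord0 /box_sum (eq_bigr (fun _ => 1)) => [|f _]; last first.
    by rewrite /qf big_ord0 mulr0 expR0.
  by rewrite sumr_const card_ffun !card_ord expn0.
have k_ord : inord k = Ordinal kn :> 'I_n.+1 by apply/val_inj; rewrite /= inordK.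
have := schur_large (Ordinal kn); rewrite schur_a_lead => large.
rewrite big_ord_recr /= mulrC k_ord schur_a_lead.
apply: le_trans (box_sum_recr q (lead_mx_unit kn) (lead_mx_unit (ltnW kn))
  (lead_mx_sym _) (@lead_mx_widen k) large) _.
by rewrite ler_wpM2l ?IH ?(ltnW kn) //.
Qed.
End LeadingBlocks.

Lemma prod_1D_le_expR_sum (R : realType) k (u : 'I_k -> R) : (forall i, 0 <= u i) ->
  \prod_i (1 + u i) <= expR (\sum_i u i).
Proof.
elim: k u => [|k IH] u u_ge0; first by rewrite !big_ord0 expR0.
rewrite !big_ord_recr /= expRD ler_pM ?expR_ge1Dx ?IH //.
by apply: prodr_ge0 => i _; have := u_ge0 (widen_ord (leqnSn k) i); lra.
by have := u_ge0 ord_max; lra.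
Qed.

Lemma powRN_expR (R : realType) (x a : R) : 0 < x -> x `^ (- a) = expR (- (ln x * a)).
Proof. by move=> x_gt0; rewrite /powR gt_eqF // mulNr mulrC. Qed.

Lemma schur_threshold (R : realType) (a alpha alpha' N : R) :
  1 <= alpha -> 1 <= alpha' -> alpha' <= N -> (alpha' * N) `^ (- a) < expR (- 8192) ->
  4096 <= ln (alpha * N) * a.
Proof.
move=> alpha1 alpha'1 alpha'N; have N1 : 1 <= N by lra.
rewrite powRN_expR ?mulr_gt0 ?ltr_expR; try lra.
have ln_ge0 : 0 <= ln (alpha' * N) by apply: ln_ge0; nra.
(* [ln (alpha' N) <= ln (N^2) <= 2 ln (alpha N)] *)
have ln_le : ln (alpha' * N) <= ln (alpha * N) + ln (alpha * N).
  rewrite -lnM ?posrE ?mulr_gt0 ?ler_ln ?posrE ?mulr_gt0 //; try lra.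
  have : alpha' * N <= N * N by rewrite ler_wpM2r //; lra.
  have : N * N <= (alpha * N) * (alpha * N) by rewrite ler_pM //; nra.
  lra.
move=> big; have a_gt0 : 0 < a by nra.
have := ler_wpM2r (ltW a_gt0) ln_le; lra.
Qed.

Lemma correlation_qf_ge0 (R : realType) n (G : 'M[R]_n) :
  correlation_matrix G -> forall z, 0 <= qf G z.
Proof.
move=> [_ [_ G_psd]] z; have := G_psd (\col_i z i); rewrite qf_mx.
by under [X in qf _ X]funext do rewrite mxE.
Qed.

Lemma supInvMax_ge1 (R : realType) (Gamma : forall n, 'M[R]_n) :
  (forall n, correlation_matrix (Gamma n)) ->
  (exists B, forall n, maxnorm (invmx (Gamma n)) <= B) -> 1 <= supInvMax Gamma.
Proof.
move=> Gamma_corr [B B_ub]; have [_ [G11 _]] := Gamma_corr 1%N.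
have -> : 1 = maxnorm (invmx (Gamma 1%N)).
  have -> : Gamma 1%N = 1%:M by apply/matrixP => i j; rewrite !ord1 G11 mxE.
  by rewrite invmx1 /maxnorm !big_ord_recl !big_ord0 mxE normr1 !max_l ?ler01.
by apply: ub_le_sup; [exists B => _ [m ->] | exists 1%N].
Qed.

Lemma Msum_le_box_sum (R : realType) n (G : 'M[R]_n) q alpha :
  Msum G q alpha <= box_sum q (ln (alpha * n%:R)) G.
Proof.
rewrite /Msum /box_sum big_mkcond /=; apply: ler_sum => y _.
rewrite /quadform qf_mx; under [X in qf _ X]funext do rewrite mxE.
by case: ifP => // _; exact: expR_ge0.
Qed.

Lemma cvg0_exists_ge1_lt (R : realType) (g : R -> R) (e : R) :
  0 < e -> g x @[x --> +oo] --> (0 : R) -> exists2 a, 1 <= a & g a < e.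
Proof.
move=> e_gt0 /cvgr0Pnorm_lt /(_ _ e_gt0) [M [_ g_near]].
exists (Num.max (M + 1) 1); first by rewrite le_max lexx orbT.
by apply: le_lt_trans (ler_norm _) (g_near _ _); rewrite lt_max ltrDl ltr01.
Qed.

Theorem mainTheorem6 (R : realType) (Gamma : forall n : nat, 'M[R]_n) (g : R -> R) :
  (forall n, correlation_matrix (Gamma n)) ->
  (forall n, Gamma n \in unitmx) ->
  CorrelationCondition Gamma g ->
  forall alpha : R, 1 <= alpha ->
  exists n0 : nat, forall n : nat, (n0 <= n)%N -> forall q : nat, (0 < q)%N ->
    Msum (Gamma n) q alpha <= expR ((2 + supInvMax Gamma) * g alpha).
Proof.
move=> Gamma_corr Gamma_unit [inv_bdd [_ [g_ge0 [g_cvg g_sum]]]] alpha alpha1.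
have [alpha' alpha'1 g_small] := cvg0_exists_ge1_lt (expR_gt0 (- 8192)) g_cvg.
exists (Num.truncn alpha').+1 => -[//|n] n_large q _.
have alpha'_le : alpha' <= n.+1%:R by rewrite (le_trans (ltW (truncnS_gt _))) ?ler_nat.
have n_pos : 0 < alpha * n.+1%:R by rewrite mulr_gt0 ?ltr0n //; lra.
have [G_sym _] := Gamma_corr n.+1.
set Psi := invmx (Gamma n.+1); set L := ln (alpha * n.+1%:R).
have Psi_sym : Psi^T = Psi by rewrite trmx_inv G_sym.
have Psi_definite := psd_unit_invmx_qf_eq0 G_sym (correlation_qf_ge0 (Gamma_corr _)) (Gamma_unit _).
have schur_large (k : 'I_n.+1) : 4096 <= L * schur_a Psi k.
  apply: (schur_threshold alpha1 alpha'1 alpha'_le); apply: le_lt_trans g_small.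
  apply: le_trans (g_sum n.+1 _ alpha'1); rewrite (bigD1 k) //= lerDl.
  by apply: sumr_ge0 => i _; exact: powR_ge0.
have schur_sum : \sum_(i < n.+1) expR (- (L * schur_a Psi (inord i))) <= g alpha.
  rewrite (eq_bigr (fun i => (alpha * n.+1%:R) `^ (- schur_a Psi i))) ?g_sum // => i _.
  by rewrite inord_val powRN_expR.
apply: le_trans (Msum_le_box_sum _ _ _) _.
rewrite -[Gamma n.+1]invmxK -/Psi -(lead_mx_full Psi).
apply: le_trans (box_sum_lead_le Psi_sym Psi_definite q schur_large (leqnn _)) _.
apply: le_trans (prod_1D_le_expR_sum _) _; first by move=> i; rewrite mulr_ge0 ?expR_ge0.
rewrite ler_expR -mulr_sumr.
have := supInvMax_ge1 Gamma_corr inv_bdd; have := g_ge0 _ alpha1; nra.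
Qed.
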